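(* For every finite multiset $\Gamma$ of IMLL formulas and formula $\varphi$: if $\Gamma\vdash\varphi$ (derivable in NIMLL), then $\Gamma\Vdash\varphi$.
   Context: Fix a countably infinite set $\mathbb{A}$ of atoms. IMLL formulas: $\varphi::= p\in\mathbb{A}\mid\varphi\otimes\varphi\mid \mathrm{I}\mid\varphi\multimap\varphi$. Collections are finite multisets; ''$,$'' denotes multiset union, $\emptyset$ the empty multiset. NIMLL is the sequent-style natural deduction system with rules: (ax) $\varphi\triangleright\varphi$; ($\multimap$I) from $\Gamma,\varphi\triangleright\psi$ infer $\Gamma\triangleright\varphi\multimap\psi$; ($\multimap$E) from $\Gamma\triangleright\varphi\multimap\psi$ and $\Delta\triangleright\varphi$ infer $\Gamma,\Delta\triangleright\psi$; ($\mathrm{I}$I) $\emptyset\triangleright\mathrm{I}$; ($\mathrm{I}$E) from $\Gamma\triangleright\varphi$ and $\Delta\triangleright\mathrm{I}$ infer $\Gamma,\Delta\triangleright\varphi$; ($\otimes$I) from $\Gamma\triangleright\varphi$ and $\Delta\triangleright\psi$ infer $\Gamma,\Delta\triangleright\varphi\otimes\psi$; ($\otimes$E) from $\Gamma\triangleright\varphi\otimes\psi$ and $\Delta,\varphi,\psi\triangleright\chi$ infer $\Gamma,\Delta\triangleright\chi$. $\Gamma\vdash\varphi$ means $\Gamma\triangleright\varphi$ is derivable. An atomic rule is $(P_1\triangleright p_1,\dots,P_n\triangleright p_n)\Rightarrow p$ ($n\ge0$, $P_i$ finite multisets of atoms); a base is a set of atomic rules. Derivability $\vdash_{\mathscr{B}}$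 is the least relation with (Ref) $[p]\vdash_{\mathscr{B}}p$; (App) if $(P_1\triangleright p_1,\dots,P_n\triangleright p_n)\Rightarrow p\in\mathscr{B}$ and $S_i,P_i\vdash_{\mathscr{B}}p_i$ for all $i$, then $S_1,\dots,S_n\vdash_{\mathscr{B}}p$. Support: (At) $\Vdash^{P}_{\mathscr{B}}p$ iff $P\vdash_{\mathscr{B}}p$; ($\otimes$) $\Vdash^{P}_{\mathscr{B}}\varphi\otimes\psi$ iff for every $\mathscr{X}\supseteq\mathscr{B}$, multiset of atoms $U$, atom $p$, if $\varphi,\psi\Vdash^{U}_{\mathscr{X}}p$ then $\Vdash^{P,U}_{\mathscr{X}}p$; ($\mathrm{I}$) $\Vdash^{P}_{\mathscr{B}}\mathrm{I}$ iff for every $\mathscr{X}\supseteq\mathscr{B}$, $U$, $p$, if $\Vdash^{U}_{\mathscr{X}}p$ then $\Vdash^{P,U}_{\mathscr{X}}p$; ($\multimap$) $\Vdash^{P}_{\mathscr{B}}\varphi\multimap\psi$ iff $\varphi\Vdash^{P}_{\mathscr{B}}\psi$; (comma) for nonempty $\Gamma,\Delta$, $\Vdash^{P}_{\mathscr{B}}\Gamma,\Delta$ iff $P=U,V$ for some $U,V$ with $\Vdash^{U}_{\mathscr{B}}\Gamma$, $\Vdash^{V}_{\mathscr{B}}\Delta$ (singleton $[\varphi]$ supported iff $\varphi$ is); (Inf) for nonempty $\Gamma$, $\Gamma\Vdash^{P}_{\mathscr{B}}\varphi$ iff for every $\mathscr{X}\supseteq\mathscr{B}$ and $U$, if $\Vdash^{U}_{\mathscr{X}}\Gamma$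 then $\Vdash^{P,U}_{\mathscr{X}}\varphi$; for empty $\Gamma$ it means $\Vdash^{P}_{\mathscr{B}}\varphi$. Validity: $\Gamma\Vdash\varphi$ iff $\Gamma\Vdash^{\emptyset}_{\mathscr{B}}\varphi$ for every base $\mathscr{B}$. *)

From Stdlib Require Import List Permutation.
Import ListNotations.

Definition atom := nat.

Inductive formula : Type :=
| Atom : atom -> formula
| Tensor : formula -> formula -> formula
| One : formula
| Lolli : formula -> formula -> formula.

(* Finite multisets are represented by lists; all relations below are closed
   under permutation, i.e. they are really relations on multisets.
   "Gamma, Delta" is list concatenation. *)

Inductive nimll : list formula -> formula -> Prop :=
| n_exch : forall G G' phi, Permutation G G' -> nimll G phi -> nimll G' phi
| n_ax : forall phi, nimll [phi] phi
| n_lolliI : forall G phi psi, nimll (G ++ [phi]) psi -> nimll G (Lolli phi psi)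
| n_lolliE : forall G D phi psi,
    nimll G (Lolli phi psi) -> nimll D phi -> nimll (G ++ D) psi
| n_oneI : nimll [] One
| n_oneE : forall G D phi, nimll G phi -> nimll D One -> nimll (G ++ D) phi
| n_tensorI : forall G D phi psi,
    nimll G phi -> nimll D psi -> nimll (G ++ D) (Tensor phi psi)
| n_tensorE : forall G D phi psi chi,
    nimll G (Tensor phi psi) -> nimll (D ++ [phi; psi]) chi -> nimll (G ++ D) chi.

(* (P_1 |> p_1, ..., P_n |> p_n) => p  is represented as ([(P_1,p_1);...], p) *)
Definition atomic_rule : Type := (list (list atom * atom) * atom)%type.
Definition base : Type := atomic_rule -> Prop.

Definition extends (B X : base) : Prop := forall r, B r -> X r.

(* In App, the list l pairs each premise (P_i, p_i) with the multiset S_i. *)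
Inductive derB (B : base) : list atom -> atom -> Prop :=
| d_perm : forall S S' p, Permutation S S' -> derB B S p -> derB B S' p
| d_ref : forall p, derB B [p] p
| d_app : forall (l : list (list atom * (list atom * atom))) (p : atom),
    B (map snd l, p) ->
    Forall (fun t => derB B (fst t ++ fst (snd t)) (snd (snd t))) l ->
    derB B (concat (map fst l)) p.

Fixpoint supp (B : base) (P : list atom) (phi : formula) {struct phi} : Prop :=
  match phi with
  | Atom p => derB B P p
  | Tensor phi1 phi2 =>
      forall (X : base) (U : list atom) (p : atom), extends B X ->
        (* phi1, phi2 ||-^U_X p  (Inf with the context [phi1; phi2]) *)
        (forall (Y : base) (V : list atom), extends X Y ->
           (exists V1 V2, Permutation V (V1 ++ V2) /\ supp Y V1 phi1 /\ supp Y V2 phi2) ->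
           derB Y (U ++ V) p) ->
        derB X (P ++ U) p
  | One =>
      forall (X : base) (U : list atom) (p : atom), extends B X ->
        derB X U p -> derB X (P ++ U) p
  | Lolli phi1 phi2 =>
      forall (X : base) (U : list atom), extends B X ->
        supp X U phi1 -> supp X (P ++ U) phi2
  end.

Fixpoint supp_ctx (B : base) (P : list atom) (G : list formula) : Prop :=
  match G with
  | [] => P = []
  | [phi] => supp B P phi
  | phi :: G' => exists U V, Permutation P (U ++ V) /\ supp B U phi /\ supp_ctx B V G'
  end.

Definition inf (B : base) (P : list atom) (G : list formula) (phi : formula) : Prop :=
  match G with
  | [] => supp B P phi
  | _ => forall (X : base) (U : list atom), extends B X ->
           supp_ctx X U G -> supp X (P ++ U) phi
  end.

Definition valid (G : list formula) (phi : formula) : Prop :=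
  forall B : base, inf B [] G phi.

(* The proof is the usual one: every rule of NIMLL preserves support. *)

From Stdlib Require Import List Permutation.
Import ListNotations.

Lemma extends_refl B : extends B B.
Proof. intros r H; exact H. Qed.

Lemma extends_trans B X Y : extends B X -> extends X Y -> extends B Y.
Proof. intros H1 H2 r H; auto. Qed.

Lemma derB_mono B X (HX : extends B X) : forall S p, derB B S p -> derB X S p.
Proof.
  fix IH 3. intros S p d. destruct d as [S S' p Hp d|p|l p Hr Hf].
  - exact (d_perm X S S' p Hp (IH _ _ d)).
  - apply d_ref.
  - apply d_app; [apply HX; exact Hr|].
    clear Hr. revert l Hf. refine (fix F l (f : Forall _ l) {struct f} := _).
    destruct f as [|x l px fl]; constructor; [exact (IH _ _ px)|exact (F l fl)].
Qed.

Lemma supp_perm : forall phi B P P', Permutation P P' -> supp B P phi -> supp B P' phi.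
Proof.
  induction phi; simpl; intros B P P' Hp H.
  - eapply d_perm; eauto.
  - intros. eapply d_perm; [|eapply H; eauto]. apply Permutation_app_tail; auto.
  - intros. eapply d_perm; [|eapply H; eauto]. apply Permutation_app_tail; auto.
  - intros. eapply IHphi2; [|eapply H; eauto]. apply Permutation_app_tail; auto.
Qed.

(* Support is monotone under base extension; non-atomic clauses already
   quantify over all extensions. *)
Lemma supp_mono : forall phi B X P, extends B X -> supp B P phi -> supp X P phi.
Proof.
  destruct phi; simpl; intros B X P HX H.
  - eapply derB_mono; eauto.
  - intros. apply H; eauto using extends_trans.
  - intros. apply H; eauto using extends_trans.
  - intros. apply H; eauto using extends_trans.
Qed.

Lemma perm_swap_last {A} (l1 l2 l3 : list A) :
  Permutation ((l1 ++ l2) ++ l3) ((l1 ++ l3) ++ l2).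
Proof.
  rewrite <- !app_assoc. apply Permutation_app_head, Permutation_app_comm.
Qed.

Lemma one_elim : forall phi B U1 U2,
  supp B U1 phi -> supp B U2 One -> supp B (U1 ++ U2) phi.
Proof.
  induction phi; simpl; intros B U1 U2 H1 H2.
  - eapply d_perm; [apply Permutation_app_comm|]. apply H2; auto using extends_refl.
  - intros X V p HX Hcd.
    eapply d_perm; [|exact (H2 X (U1 ++ V) p HX (H1 X V p HX Hcd))].
    rewrite app_assoc. apply Permutation_app_tail, Permutation_app_comm.
  - intros X V p HX HV. rewrite <- app_assoc. apply (H1 X (U2 ++ V) p HX (H2 X V p HX HV)).
  - intros X V HX Hc.
    eapply supp_perm; [apply perm_swap_last|].
    exact (IHphi2 X (U1 ++ V) U2 (H1 X V HX Hc) (supp_mono One B X U2 HX H2)).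
Qed.

(* Tensor elimination with an atomic conclusion: this is the tensor clause of
   support, read with the split of the resource made explicit. *)
Lemma tensor_elim_atom a b B U1 U2 p :
  supp B U1 (Tensor a b) ->
  (forall X V W, extends B X -> supp X V a -> supp X W b -> derB X (U2 ++ V ++ W) p) ->
  derB B (U1 ++ U2) p.
Proof.
  simpl. intros H Hh. apply (H B U2 p (extends_refl B)).
  intros Y V HY [V1 [V2 [Hp [Ha Hb]]]].
  eapply d_perm; [|exact (Hh Y V1 V2 HY Ha Hb)].
  apply Permutation_app_head. symmetry; exact Hp.
Qed.

(* Tensor elimination for an arbitrary conclusion [chi]; the non-atomic
   clauses of [chi] reduce to atomic conclusions in extended bases. *)
Lemma tensor_elim : forall chi a b B U1 U2, supp B U1 (Tensor a b) ->
  (forall X V W, extends B X -> supp X V a -> supp X W b -> supp X (U2 ++ V ++ W) chi) ->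
  supp B (U1 ++ U2) chi.
Proof.
  induction chi as [q|c _ d _| |c _ d IHd]; intros a b B U1 U2 H Hh.
  - exact (tensor_elim_atom a b B U1 U2 q H Hh).
  - simpl. intros X V p HX Hcd. rewrite <- app_assoc.
    apply (tensor_elim_atom a b); [exact (supp_mono _ B X U1 HX H)|].
    intros Y W1 W2 HY Ha Hb.
    assert (Hcd' : supp Y (U2 ++ W1 ++ W2) (Tensor c d))
      by exact (Hh Y W1 W2 (extends_trans _ _ _ HX HY) Ha Hb).
    eapply d_perm; [apply perm_swap_last|].
    apply (Hcd' Y V p (extends_refl Y)).
    intros Y' W' HY'. apply Hcd. eapply extends_trans; eauto.
  - simpl. intros X V p HX HV. rewrite <- app_assoc.
    apply (tensor_elim_atom a b); [exact (supp_mono _ B X U1 HX H)|].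
    intros Y W1 W2 HY Ha Hb.
    assert (Hone : supp Y (U2 ++ W1 ++ W2) One)
      by exact (Hh Y W1 W2 (extends_trans _ _ _ HX HY) Ha Hb).
    eapply d_perm; [apply perm_swap_last|].
    exact (Hone Y V p (extends_refl Y) (derB_mono _ _ HY _ _ HV)).
  - simpl. intros X V HX Hc. rewrite <- app_assoc.
    apply (IHd a b); [exact (supp_mono _ B X U1 HX H)|].
    intros Y W1 W2 HY Ha Hb.
    assert (Hl : supp Y (U2 ++ W1 ++ W2) (Lolli c d))
      by exact (Hh Y W1 W2 (extends_trans _ _ _ HX HY) Ha Hb).
    eapply supp_perm; [apply perm_swap_last|].
    exact (Hl Y V (extends_refl Y) (supp_mono _ _ _ _ HY Hc)).
Qed.

Lemma tensor_intro a b B U1 U2 :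
  supp B U1 a -> supp B U2 b -> supp B (U1 ++ U2) (Tensor a b).
Proof.
  simpl. intros Ha Hb X U p HX H.
  eapply d_perm; [apply Permutation_app_comm|].
  apply (H X (U1 ++ U2) (extends_refl X)).
  exists U1, U2. repeat split; [reflexivity|eapply supp_mono; eauto..].
Qed.

Inductive sctx (B : base) : list atom -> list formula -> Prop :=
| sc_nil : sctx B [] []
| sc_cons : forall P U V phi G, supp B U phi -> sctx B V G -> Permutation P (U ++ V) ->
    sctx B P (phi :: G).

Lemma sctx_single B U phi : supp B U phi -> sctx B U [phi].
Proof.
  intros H. econstructor; [exact H|constructor|]. rewrite app_nil_r; reflexivity.
Qed.

Lemma sctx_mono B X P G : extends B X -> sctx B P G -> sctx X P G.
Proof.
  intros HX H; induction H; econstructor; eauto. eapply supp_mono; eauto.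
Qed.

Lemma sctx_split B G D : forall U, sctx B U (G ++ D) ->
  exists U1 U2, Permutation U (U1 ++ U2) /\ sctx B U1 G /\ sctx B U2 D.
Proof.
  induction G; simpl; intros U H.
  - exists [], U. repeat split; [reflexivity|constructor|exact H].
  - inversion H as [|P0 U0 V phi0 G0 Hs Hv Hq]; subst.
    destruct (IHG V Hv) as [U1 [U2 [Hp [H1 H2]]]].
    exists (U0 ++ U1), U2. repeat split; [|econstructor; [eauto|eauto|reflexivity]|exact H2].
    rewrite Hq, Hp, app_assoc. reflexivity.
Qed.

Lemma sctx_join B G D : forall U1 U2, sctx B U1 G -> sctx B U2 D -> sctx B (U1 ++ U2) (G ++ D).
Proof.
  induction G; simpl; intros U1 U2 H1 H2.
  - inversion H1; subst. exact H2.
  - inversion H1 as [|P0 U0 V phi0 G0 Hs Hv Hq]; subst.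
    econstructor; [exact Hs|apply IHG; eauto|]. rewrite Hq, app_assoc. reflexivity.
Qed.

Lemma sctx_permG B G G' : Permutation G G' -> forall U, sctx B U G -> sctx B U G'.
Proof.
  induction 1; intros U HU.
  - exact HU.
  - inversion HU; subst. econstructor; eauto.
  - inversion HU as [|P0 U0 V0 phi0 G0 Hs Hv Hq]; subst.
    inversion Hv as [|P1 U1 V1 phi1 G1 Hs1 Hv1 Hq1]; subst.
    econstructor; [exact Hs1|econstructor; [exact Hs|exact Hv1|reflexivity]|].
    rewrite Hq, Hq1, !app_assoc. apply Permutation_app_tail, Permutation_app_comm.
  - eauto.
Qed.

Lemma supp_ctx_sctx : forall G B P, supp_ctx B P G -> sctx B P G.
Proof.
  induction G as [|f G IH]; intros B P H.
  - simpl in H; subst; constructor.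
  - destruct G as [|g G'].
    + exact (sctx_single B P f H).
    + destruct H as [U [V [Hp [H1 H2]]]]. econstructor; eauto.
Qed.

Definition sem (G : list formula) (phi : formula) : Prop :=
  forall B U, sctx B U G -> supp B U phi.

Lemma sem_app G D chi :
  (forall B U1 U2, sctx B U1 G -> sctx B U2 D -> supp B (U1 ++ U2) chi) -> sem (G ++ D) chi.
Proof.
  intros H B U HU. destruct (sctx_split _ _ _ _ HU) as [U1 [U2 [Hp [H1 H2]]]].
  eapply supp_perm; [symmetry; exact Hp|]. exact (H B U1 U2 H1 H2).
Qed.

Lemma sem_exch G G' phi : Permutation G G' -> sem G phi -> sem G' phi.
Proof.
  intros Hp H B U HU. apply H. eapply sctx_permG; [symmetry; exact Hp|exact HU].
Qed.

Lemma sem_ax phi : sem [phi] phi.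
Proof.
  intros B U HU. inversion HU as [|P0 U0 V0 phi0 G0 Hs Hv Hq]; subst.
  inversion Hv; subst. eapply supp_perm; [|exact Hs]. rewrite Hq, app_nil_r. reflexivity.
Qed.

Lemma sem_lolliI G phi psi : sem (G ++ [phi]) psi -> sem G (Lolli phi psi).
Proof.
  intros H B U HU X V HX Hv. apply H, sctx_join; [eapply sctx_mono; eauto|].
  exact (sctx_single X V phi Hv).
Qed.

Lemma sem_lolliE G D phi psi : sem G (Lolli phi psi) -> sem D phi -> sem (G ++ D) psi.
Proof.
  intros H1 H2. apply sem_app. intros B U1 U2 HU1 HU2.
  exact (H1 B U1 HU1 B U2 (extends_refl B) (H2 B U2 HU2)).
Qed.

Lemma sem_oneI : sem [] One.
Proof. intros B U HU. inversion HU; subst. simpl. intros X V p _ H. exact H. Qed.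

Lemma sem_oneE G D phi : sem G phi -> sem D One -> sem (G ++ D) phi.
Proof.
  intros H1 H2. apply sem_app. intros B U1 U2 HU1 HU2. apply one_elim; auto.
Qed.

Lemma sem_tensorI G D phi psi : sem G phi -> sem D psi -> sem (G ++ D) (Tensor phi psi).
Proof.
  intros H1 H2. apply sem_app. intros B U1 U2 HU1 HU2. apply tensor_intro; auto.
Qed.

Lemma sem_tensorE G D phi psi chi :
  sem G (Tensor phi psi) -> sem (D ++ [phi; psi]) chi -> sem (G ++ D) chi.
Proof.
  intros H1 H2. apply sem_app. intros B U1 U2 HU1 HU2.
  apply (tensor_elim chi phi psi); [exact (H1 B U1 HU1)|].
  intros X V W HX Ha Hb.
  apply H2, sctx_join; [eapply sctx_mono; eauto|].
  econstructor; [exact Ha|exact (sctx_single X W psi Hb)|reflexivity].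
Qed.

Lemma nimll_sem G phi : nimll G phi -> sem G phi.
Proof.
  induction 1.
  - eapply sem_exch; eauto.
  - apply sem_ax.
  - apply sem_lolliI; assumption.
  - eapply sem_lolliE; eauto.
  - apply sem_oneI.
  - apply sem_oneE; assumption.
  - apply sem_tensorI; assumption.
  - eapply sem_tensorE; eauto.
Qed.

Theorem theorem3 : forall (G : list formula) (phi : formula),
  nimll G phi -> valid G phi.
Proof.
  intros G phi H B. pose proof (nimll_sem G phi H) as Hsem.
  destruct G as [|f G].
  - apply Hsem. constructor.
  - intros X U _ Hc. apply Hsem, supp_ctx_sctx, Hc.
Qed.
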